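(* For all real numbers $r,k$, the map $f(x)=x^2\exp(r-x)+k$, $x\in\mathbb{R}$, has negative Schwarzian derivative, i.e. \[ Sf(x)=\frac{f'''(x)}{f'(x)}-\frac{3}{2}\left(\frac{f''(x)}{f'(x)}\right)^2<0 \] for every $x\in\mathbb{R}$ with $f'(x)\neq 0$ (that is, for every $x\notin\{0,2\}$). *)

From Stdlib Require Import Reals.
From Coquelicot Require Import Coquelicot.
Open Scope R_scope.

Definition schwarzian (f : R -> R) (x : R) : R :=
  Derive_n f 3 x / Derive f x - 3 / 2 * (Derive_n f 2 x / Derive f x) ^ 2.

(** Every derivative of [y ^ 2 * exp (r - y) + k] is a quadratic polynomial
    times [exp (r - y)].  Where [f' <> 0], [Sf < 0] amounts to
    [2 f' f''' < 3 f''^2], and after cancelling [exp (r - x) ^ 2] the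
    difference [3 f''^2 - 2 f' f'''] is the sum of squares
    [((x - 2)^2 - 2)^2 + 4 (x - 1)^2 + 4]. *)

From Stdlib Require Import Reals Lra.
From Coquelicot Require Import Coquelicot.
Open Scope R_scope.

Lemma schwarzian_neg (f : R -> R) (x : R) :
  Derive f x <> 0 ->
  2 * Derive f x * Derive_n f 3 x < 3 * Derive_n f 2 x ^ 2 ->
  schwarzian f x < 0.
Proof.
  intros Hf1 Hlt; unfold schwarzian.
  set (f1 := Derive f x) in *; set (f2 := Derive_n f 2 x) in *;
    set (f3 := Derive_n f 3 x) in *.
  replace (f3 / f1 - 3 / 2 * (f2 / f1) ^ 2)
    with ((2 * f1 * f3 - 3 * f2 ^ 2) / (2 * f1 ^ 2)) by (field; exact Hf1).
  apply Rdiv_neg_pos; [lra |].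
  assert (0 < f1 ^ 2) by (apply pow2_gt_0; exact Hf1).
  lra.
Qed.

Definition quad_exp (a b c r : R) (y : R) : R :=
  (a * y ^ 2 + b * y + c) * exp (r - y).

Lemma Derive_quad_exp (a b c r y : R) :
  Derive (quad_exp a b c r) y = quad_exp (- a) (2 * a - b) (b - c) r y.
Proof.
  apply is_derive_unique; unfold quad_exp.
  auto_derive; [exact I | unfold Rminus; ring].
Qed.

Lemma quad_exp_schwarzian_identity (r x : R) :
  3 * quad_exp 1 (-4) 2 r x ^ 2
    - 2 * quad_exp (-1) 2 0 r x * quad_exp (-1) 6 (-6) r x
  = exp (r - x) ^ 2 * (((x - 2) ^ 2 - 2) ^ 2 + 4 * (x - 1) ^ 2 + 4).
Proof. unfold quad_exp; ring. Qed.

Lemma quad_exp_schwarzian_ineq (r x : R) :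
  2 * quad_exp (-1) 2 0 r x * quad_exp (-1) 6 (-6) r x
    < 3 * quad_exp 1 (-4) 2 r x ^ 2.
Proof.
  assert (Hsos : 0 < ((x - 2) ^ 2 - 2) ^ 2 + 4 * (x - 1) ^ 2 + 4).
  { assert (0 <= ((x - 2) ^ 2 - 2) ^ 2) by apply pow2_ge_0.
    assert (0 <= (x - 1) ^ 2) by apply pow2_ge_0.
    lra. }
  assert (0 < exp (r - x) ^ 2 * (((x - 2) ^ 2 - 2) ^ 2 + 4 * (x - 1) ^ 2 + 4)).
  { apply Rmult_lt_0_compat; [apply pow_lt, exp_pos | exact Hsos]. }
  pose proof (quad_exp_schwarzian_identity r x).
  lra.
Qed.

Theorem proposition2p1 (r k : R) :
  forall x : R,
    Derive (fun y => y ^ 2 * exp (r - y) + k) x <> 0 ->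
    schwarzian (fun y => y ^ 2 * exp (r - y) + k) x < 0.
Proof.
  intros x Hf1.
  set (f := fun y => y ^ 2 * exp (r - y) + k) in *.
  assert (D1 : forall y, Derive f y = quad_exp (-1) 2 0 r y).
  { intro y; apply is_derive_unique; unfold f, quad_exp.
    auto_derive; [exact I | unfold Rminus; ring]. }
  assert (D2 : forall y, Derive_n f 2 y = quad_exp 1 (-4) 2 r y).
  { intro y; change (Derive (Derive f) y = quad_exp 1 (-4) 2 r y).
    rewrite (Derive_ext _ _ y D1), Derive_quad_exp; f_equal; ring. }
  assert (D3 : Derive_n f 3 x = quad_exp (-1) 6 (-6) r x).
  { change (Derive (Derive_n f 2) x = quad_exp (-1) 6 (-6) r x).
    rewrite (Derive_ext _ _ x D2), Derive_quad_exp; f_equal; ring. }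
  apply schwarzian_neg; [exact Hf1 |].
  rewrite D1, D2, D3.
  apply quad_exp_schwarzian_ineq.
Qed.
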